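(* Let $S$ be an MPD-semigroup generated by $\mathcal A=\{\mathbf a_1,\dots,\mathbf a_n\}\subset\mathbb N^d$. Then every Frobenius element of $S$ is a Frobenius vector of $S$.
   Context: $S$ is an MPD-semigroup if, for a field $\Bbbk$, the $\Bbbk[x_1,\dots,x_n]$-module $\Bbbk[S]$ (via $x_i\mapsto\chi^{\mathbf a_i}$) has depth $1$ (projective dimension $n-1$). $\mathrm{pos}(S)=\{\sum_i\lambda_i\mathbf a_i:\lambda_i\in\mathbb Q_{\ge0}\}$, $\mathcal H(S)=(\mathrm{pos}(S)\setminus S)\cap\mathbb N^d$. A term order on $\mathbb N^d$ is a total order compatible with addition with $0$ least. $\mathbf f\in\mathcal H(S)$ is a Frobenius element of $S$ if $\mathbf f=\max_\prec\mathcal H(S)$ for some term order $\prec$. Let $G(\mathcal A)$ be the subgroup of $\mathbb Z^d$ generated by $\mathcal A$ and $\mathrm{relint}(\mathrm{pos}(S))$ the relative interior of $\mathrm{pos}(S)$. A Frobenius vector of $S$ is an $\mathbf f\in G(\mathcal A)\setminus S$ such that $\mathbf f+(\mathrm{relint}(\mathrm{pos}(S))\cap G(\mathcal A))\subseteq S\setminus\{0\}$. *)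

From HB Require Import structures.
From mathcomp Require Import all_boot all_order all_algebra.
From mathcomp Require Import mpoly.
Set Implicit Arguments. Unset Strict Implicit. Unset Printing Implicit Defensive.
Import Order.TTheory GRing.Theory Num.Theory.
Local Open Scope ring_scope.

(* N^d is represented by multinomials 'X_{1..d}; Z^d by 'rV[int]_d;
   Q^d by 'rV[rat]_d.  The generators are a : 'I_n -> 'X_{1..d}. *)

Definition toZ {d : nat} (m : 'X_{1..d}) : 'rV[int]_d := \row_j ((m j)%:Z).
Definition toQ {d : nat} (m : 'X_{1..d}) : 'rV[rat]_d := \row_j ((m j)%:R).
Definition ZtoQ {d : nat} (v : 'rV[int]_d) : 'rV[rat]_d := \row_j ((v 0 j)%:~R).

Section Semigroup.
Variables (n d : nat) (a : 'I_n -> 'X_{1..d}).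

Definition inS (v : 'rV[int]_d) : Prop :=
  exists c : 'I_n -> nat, v = \sum_(i < n) toZ (a i) *+ c i.

Definition inG (v : 'rV[int]_d) : Prop :=
  exists z : 'I_n -> int, v = \sum_(i < n) toZ (a i) *~ z i.

Definition inPos (x : 'rV[rat]_d) : Prop :=
  exists lam : 'I_n -> rat, (forall i, 0 <= lam i) /\
    x = \sum_(i < n) lam i *: toQ (a i).

Definition aff_hull (X : 'rV[rat]_d -> Prop) (x : 'rV[rat]_d) : Prop :=
  exists (m : nat) (c : 'I_m -> 'rV[rat]_d) (mu : 'I_m -> rat),
    (forall j, X (c j)) /\ \sum_(j < m) mu j = 1 /\
    x = \sum_(j < m) mu j *: c j.

Definition relint (X : 'rV[rat]_d -> Prop) (x : 'rV[rat]_d) : Prop :=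
  X x /\ exists e : rat, 0 < e /\
    forall y, aff_hull X y -> (forall j, `|y 0 j - x 0 j| < e) -> X y.

Definition inHoles (m : 'X_{1..d}) : Prop := inPos (toQ m) /\ ~ inS (toZ m).

Definition term_order (le : rel 'X_{1..d}) : Prop :=
  reflexive le /\ antisymmetric le /\ transitive le /\ total le /\
  (forall u v w, le u v -> le (mnm_add u w) (mnm_add v w)) /\
  (forall u, le (@mnm0 d) u).

Definition frobenius_element (f : 'X_{1..d}) : Prop :=
  inHoles f /\ exists le : rel 'X_{1..d}, term_order le /\
    forall h, inHoles h -> le h f.

Definition frobenius_vector (f : 'rV[int]_d) : Prop :=
  inG f /\ ~ inS f /\
  forall w : 'rV[int]_d, relint inPos (ZtoQ w) -> inG w ->
    inS (f + w) /\ f + w <> 0.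

(* The k[x_1..x_n]-module k[S] = image of x_i |-> t^{a_i} in k[t_1..t_d]. *)
Section Module.
Variable k : fieldType.

Definition phi (p : {mpoly k[n]}) : {mpoly k[d]} :=
  comp_mpoly [tuple 'X_[a i] | i < n] p.

Definition inM (m : {mpoly k[d]}) : Prop := exists p, m = phi p.

Definition inSubM (fs : seq {mpoly k[n]}) (m : {mpoly k[d]}) : Prop :=
  exists g : 'I_(size fs) -> {mpoly k[n]},
    m = \sum_(j < size fs) phi (fs`_j) * phi (g j).

Definition in_irrelevant (f : {mpoly k[n]}) : Prop := f@_(@mnm0 n) = 0.

Definition regular_seq (fs : seq {mpoly k[n]}) : Prop :=
  (forall i, (i < size fs)%N -> in_irrelevant fs`_i) /\
  (forall i, (i < size fs)%N -> forall m, inM m ->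
      inSubM (take i fs) (phi fs`_i * m) -> inSubM (take i fs) m) /\
  (exists m, inM m /\ ~ inSubM fs m).

(* depth_{(x)} k[S] = 1: (x)M <> M, and the maximal M-regular sequences in
   (x_1..x_n) (which all have the same length) have length 1. *)
Definition depth_one : Prop :=
  (exists m, inM m /\ ~ inSubM [seq 'X_i | i <- enum 'I_n] m) /\
  (exists fs, size fs = 1%N /\ regular_seq fs) /\
  ~ (exists fs, size fs = 2%N /\ regular_seq fs).

End Module.

Definition MPD (k : fieldType) : Prop := depth_one k.

End Semigroup.

From mathcomp Require Import all_boot all_order all_algebra.
From mathcomp Require Import mpoly.
From Stdlib Require Import Classical.
Set Implicit Arguments. Unset Strict Implicit. Unset Printing Implicit Defensive.
Import Order.TTheory GRing.Theory Num.Theory.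
Local Open Scope ring_scope.

(* If [f] is the largest hole for a term order and [m <> 0] lies in pos(S),
   then [f + m] is a point of pos(S) above [f], hence not a hole, hence in S.
   This gives [f + w] in S for every [w] in the relative interior (such [w]
   are nonzero lattice points of pos(S)), and [f = (f + a_i) - a_i] in G(A)
   for any nonzero generator. *)

Lemma toZD (d : nat) (u v : 'X_{1..d}) : toZ (u + v)%MM = toZ u + toZ v.
Proof. by apply/rowP => j; rewrite !mxE mnmDE PoszD. Qed.

Lemma toQD (d : nat) (u v : 'X_{1..d}) : toQ (u + v)%MM = toQ u + toQ v.
Proof. by apply/rowP => j; rewrite !mxE mnmDE natrD. Qed.

Lemma toZ0 (d : nat) : toZ (0%MM : 'X_{1..d}) = 0.
Proof. by apply/rowP => j; rewrite !mxE mnm0E. Qed.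

Lemma toQ0 (d : nat) : toQ (0%MM : 'X_{1..d}) = 0.
Proof. by apply/rowP => j; rewrite !mxE mnm0E. Qed.

Lemma ZtoQ_toZ (d : nat) (u : 'X_{1..d}) : ZtoQ (toZ u) = toQ u.
Proof. by apply/rowP => j; rewrite !mxE. Qed.

Lemma toZ_inj (d : nat) : injective (@toZ d).
Proof.
by move=> u v /rowP eq_uv; apply/mnmP => j; have := eq_uv j; rewrite !mxE => -[].
Qed.

Lemma ZtoQ_ge0_toZ (d : nat) (w : 'rV[int]_d) :
  (forall j, 0 <= ZtoQ w 0 j) -> exists m : 'X_{1..d}, w = toZ m.
Proof.
move=> w_ge0; exists [multinom `|w ord0 j|%N | j < d]; apply/rowP => j.
by have := w_ge0 j; rewrite !mxE mnmE ler0z => /gez0_abs ->.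
Qed.

Lemma term_order_addr (d : nat) (le : rel 'X_{1..d}) (u m : 'X_{1..d}) :
  term_order le -> le u (u + m)%MM.
Proof.
case=> _ [_ [_ [_ [le_add le0]]]].
by have := le_add _ _ u (le0 m); rewrite add0m addmC.
Qed.

Section Semigroup.
Variables (n d : nat) (a : 'I_n -> 'X_{1..d}).

Lemma inS_gen i : inS a (toZ (a i)).
Proof.
exists (fun j => (j == i) : nat); rewrite (bigD1 i) //= eqxx big1 ?addr0 //.
by move=> j /negbTE ->.
Qed.

Lemma inG_subS u v : inS a u -> inS a v -> inG a (u - v).
Proof.
move=> [c ->] [c' ->]; exists (fun i => (c i)%:Z - (c' i)%:Z).
by rewrite -sumrB; apply: eq_bigr => i _; rewrite mulrzBr.
Qed.

Lemma inPos0 : inPos a 0.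
Proof. by exists (fun _ => 0); split => //; rewrite big1 // => i _; rewrite scale0r. Qed.

Lemma inPos_gen i : inPos a (toQ (a i)).
Proof.
exists (fun j => (j == i)%:R); split => [j|]; first by rewrite ler0n.
rewrite (bigD1 i) //= eqxx scale1r big1 ?addr0 // => j /negbTE ->.
by rewrite scale0r.
Qed.

Lemma inPosD x y : inPos a x -> inPos a y -> inPos a (x + y).
Proof.
move=> [l1 [l1_ge0 ->]] [l2 [l2_ge0 ->]]; exists (fun i => l1 i + l2 i).
split=> [i|]; first by rewrite addr_ge0.
by rewrite -big_split; apply: eq_bigr => i _; rewrite scalerDl.
Qed.

Lemma inPos_ge0 x : inPos a x -> forall j, 0 <= x 0 j.
Proof.
move=> [l [l_ge0 ->]] j; rewrite summxE; apply: sumr_ge0 => i _.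
by rewrite !mxE mulr_ge0.
Qed.

Lemma inPos_toQ_eq0 m :
  (forall i, a i = 0%MM) -> inPos a (toQ m) -> m = 0%MM.
Proof.
move=> a0 [l [_ /rowP m_eq]]; apply/mnmP => j; have := m_eq j.
rewrite summxE big1 => [|i _]; last by rewrite a0 !mxE mnm0E mulr0.
by rewrite !mxE mnm0E => /eqP; rewrite pnatr_eq0 => /eqP.
Qed.

Lemma inHoles_gen_neq0 m : inHoles a m -> exists i, a i <> 0%MM.
Proof.
move=> [pos_m notS_m].
case: (boolP [exists i, a i != 0%MM]) => [/existsP[i /eqP]|]; first by exists i.
rewrite negb_exists => /forallP a0; case: notS_m.
rewrite (inPos_toQ_eq0 (fun i => eqP (negbNE (a0 i))) pos_m) toZ0.
by exists (fun _ => 0%N); rewrite big1 // => i _; rewrite mulr0n.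
Qed.

(* The segment from 0 through [a i] leaves pos(S) on the far side of 0, at
   points arbitrarily close to 0. *)
Lemma relint_inPos_neq0 i : a i <> 0%MM -> ~ relint (inPos a) 0.
Proof.
move=> ai0 [_ [e [e_gt0 near0]]].
have [j /eqP aij0] : exists j, a i j != 0%N.
  apply/existsP; apply: contra_notT ai0 => /existsPn aij0.
  by apply/mnmP => j; rewrite mnm0E; apply/eqP/negPn.
pose M := (\max_(j < d) a i j)%N.
pose t : rat := e / M.+1%:R.
have t_gt0 : 0 < t by rewrite divr_gt0 // ltr0n.
have aff : aff_hull (inPos a) (- (t *: toQ (a i))).
  exists 2%N, (fun k : 'I_2 => if k == ord0 then 0 else toQ (a i)),
    (fun k : 'I_2 => if k == ord0 then 1 + t else - t).
  split; first by move=> k; case: ifP => _; [exact: inPos0 | exact: inPos_gen].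
  by rewrite !big_ord_recl !big_ord0 /= !addr0 scaler0 add0r scaleNr addrK.
have small l : `|(- (t *: toQ (a i))) 0 l - (0 : 'rV[rat]_d) 0 l| < e.
  rewrite !mxE subr0 normrN normrM gtr0_norm // normr_nat.
  rewrite /t mulrAC ltr_pdivrMr ?ltr0n // ltr_pM2l // ltr_nat ltnS.
  exact: (leq_bigmax l).
have := inPos_ge0 (near0 _ aff small) j; rewrite !mxE oppr_ge0.
by apply/negP; rewrite -ltNge mulr_gt0 // ltr0n lt0n; apply/eqP.
Qed.

Lemma frobenius_element_addS f m :
  frobenius_element a f -> m <> 0%MM -> inPos a (toQ m) -> inS a (toZ (f + m)%MM).
Proof.
move=> [[pos_f _] [le [le_order le_max]]] m0 pos_m.
apply: NNPP => notS_fm.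
have hole_fm : inHoles a (f + m)%MM by split=> //; rewrite toQD; apply: inPosD.
have [_ [le_anti _]] := le_order.
have f_eq : (f + 0)%MM = (f + m)%MM.
  by rewrite addm0; apply: le_anti; rewrite term_order_addr // le_max.
by apply: m0; rewrite (addmI f_eq).
Qed.

End Semigroup.

Theorem proposition3p3 (k : fieldType) (n d : nat) (a : 'I_n -> 'X_{1..d}) :
  MPD a k ->
  forall f : 'X_{1..d}, frobenius_element a f -> frobenius_vector a (toZ f).
Proof.
move=> _ f frob_f; have [[pos_f notS_f] _] := frob_f.
have [i ai0] := inHoles_gen_neq0 (conj pos_f notS_f).
split; last split=> // w relint_w _.
  have := inG_subS (frobenius_element_addS frob_f ai0 (inPos_gen a i)) (inS_gen a i).
  by rewrite toZD addrK.
have pos_w := relint_w.1.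
have [m w_def] := ZtoQ_ge0_toZ (inPos_ge0 pos_w).
rewrite w_def ZtoQ_toZ in pos_w relint_w; rewrite w_def -toZD.
have m0 : m <> 0%MM.
  by move=> m0; apply: (relint_inPos_neq0 ai0); rewrite m0 toQ0 in relint_w.
split; first exact: frobenius_element_addS.
by rewrite -(toZ0 d) => /toZ_inj /eqP; rewrite mnmD_eq0 => /andP[_ /eqP].
Qed.
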